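(* For every $\delta\in[0,1)$ and every $V_{\sf P}>-1$, the limits $\lim_{p\to0}{\sf Eng}({\sf PEAR})$ and $\lim_{p\to0}{\sf Util}({\sf PEAR})$ exist and satisfy $$\lim_{p\to0}{\sf Eng}({\sf PEAR})<{\sf Eng}({\sf APP}),\qquad \lim_{p\to0}{\sf Util}({\sf PEAR})>{\sf Util}({\sf APP}),$$ where ${\sf Eng}({\sf APP})=\frac{1}{1-\delta}\frac{2e^{V_{\sf P}}}{1+2e^{V_{\sf P}}}$ and ${\sf Util}({\sf APP})=\frac{1}{1-\delta}\ln(1+2e^{V_{\sf P}})$ do not depend on $p$.
   Context: Model. Time $t=0,1,2,\dots$, discount factor $\delta\in[0,1)$. Two item types, popular ${\sf P}$ and niche ${\sf N}$, infinitely many items each; at each time $t$ the platform recommends a set $\pi_t$ of two fresh items of chosen types. Utility of item $i$: $u_i=V_{\tau(i)}+\epsilon_i$; outside option: $u_\emptyset=\epsilon_\emptyset$; all noises i.i.d. Gumbel with scale $1$ and mean $0$. User chooses $c_t=\arg\max_{j\in\pi_t\cup\{\emptyset\}}u_j$. $V_{\sf P}$ is a known constant; $V_{\sf N}$ is drawn once, fixed over time, independent of noise, with $\mathbb P(V_{\sf N}=(1-p)/p)=p$, $\mathbb P(V_{\sf N}=-1)=1-p$, $p\in(0,1)$. ${\sf Eng}(\pi)=\sum_{t\ge0}\delta^t\mathbb P(c_t\ne\emptyset)$, ${\sf Util}(\pi)=\sum_{t\ge0}\delta^t\mathbb E[\max_{j\in\pi_t\cup\{\emptyset\}}u_j]$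 (expectations also over $V_{\sf N}$). ${\sf APP}$ recommends two popular items at every time. Policy ${\sf PEAR}$: let $\rho_1=\frac{e^{(1-p)/p}}{1+e^{V_{\sf P}}+e^{(1-p)/p}}$, $\rho_2=\frac{e^{-1}}{1+e^{V_{\sf P}}+e^{-1}}$. Maintain counters $S,F$ (initially $0$) and $p_0=p$. At each time $t$: if $p_t\ge p$, recommend one popular and one niche item; if the niche item is chosen increment $S$, otherwise increment $F$. If $p_t<p$, recommend two popular items. Then set $p_{t+1}=\left(1+\frac{1-p}{p}\cdot\frac{\rho_2^S(1-\rho_2)^F}{\rho_1^S(1-\rho_1)^F}\right)^{-1}$. *)

From Stdlib Require Import Reals Lra Lia.
From Coquelicot Require Import Coquelicot.
Open Scope R_scope.

(* Gumbel(scale 1, mean 0) noise => multinomial-logit choice and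
   E[max utility] = ln(1 + sum_j e^{V_j}) (outside option has V = 0).   *)

(* probability that the niche item is chosen from the menu {P, N},
   when V_N = v *)
Definition qN (VP v : R) : R := exp v / (1 + exp VP + exp v).

Definition rho1 (VP p : R) : R :=
  exp ((1 - p) / p) / (1 + exp VP + exp ((1 - p) / p)).
Definition rho2 (VP : R) : R := exp (-1) / (1 + exp VP + exp (-1)).

(* PEAR's belief p_t as a function of the counters (S,F); p_0 = post 0 0 = p *)
Definition post (VP p : R) (s f : nat) : R :=
  / (1 + (1 - p) / p *
         ((rho2 VP ^ s * (1 - rho2 VP) ^ f) /
          (rho1 VP p ^ s * (1 - rho1 VP p) ^ f))).

(* PEAR explores (recommends one popular and one niche item) iff p_t >= p *)
Definition explore (VP p : R) (s f : nat) : bool :=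
  if Rle_dec p (post VP p s f) then true else false.

(* dist VP p v t s f = P(counters at time t equal (s,f) | V_N = v) *)
Fixpoint dist (VP p v : R) (t : nat) : nat -> nat -> R :=
  match t with
  | O => fun s f => match s, f with O, O => 1 | _, _ => 0 end
  | S t' => fun s f =>
      (if explore VP p s f then 0 else dist VP p v t' s f)
      + match s with
        | O => 0
        | S s' => if explore VP p s' f then dist VP p v t' s' f * qN VP v else 0
        end
      + match f with
        | O => 0
        | S f' => if explore VP p s f' then dist VP p v t' s f' * (1 - qN VP v) else 0
        end
  end.

(* one-step engagement P(c_t <> empty) and expected utility E[max u]
   for each menu, when V_N = v *)
Definition engExplore (VP v : R) : R := (exp VP + exp v) / (1 + exp VP + exp v).
Definition engApp (VP : R) : R := 2 * exp VP / (1 + 2 * exp VP).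
Definition utilExplore (VP v : R) : R := ln (1 + exp VP + exp v).
Definition utilApp (VP : R) : R := ln (1 + 2 * exp VP).

(* expected value at time t of a per-step quantity, given V_N = v
   (the counters satisfy s + f <= t, so s, f <= t covers the support) *)
Definition stepExp (VP p v : R) (gE : R) (gA : R) (t : nat) : R :=
  sum_f_R0 (fun s => sum_f_R0 (fun f =>
     dist VP p v t s f * (if explore VP p s f then gE else gA)) t) t.

(* V_N = (1-p)/p with probability p, V_N = -1 with probability 1-p *)
Definition EngPEAR (delta VP p : R) : R :=
  Series (fun t => delta ^ t *
    (p * stepExp VP p ((1 - p) / p) (engExplore VP ((1 - p) / p)) (engApp VP) t
     + (1 - p) * stepExp VP p (-1) (engExplore VP (-1)) (engApp VP) t)).

Definition UtilPEAR (delta VP p : R) : R :=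
  Series (fun t => delta ^ t *
    (p * stepExp VP p ((1 - p) / p) (utilExplore VP ((1 - p) / p)) (utilApp VP) t
     + (1 - p) * stepExp VP p (-1) (utilExplore VP (-1)) (utilApp VP) t)).

Definition EngAPP (delta VP : R) : R := Series (fun t => delta ^ t * engApp VP).
Definition UtilAPP (delta VP : R) : R := Series (fun t => delta ^ t * utilApp VP).

(* As p -> 0 the high niche value (1 - p) / p makes the niche choice
   probability rho1 tend to 1.  Hence, for p small enough (depending on the horizon
   T), PEAR explores in every state without failure, while a single failure makes the
   likelihood ratio exceed 1 and stops exploration for good: up to time T the counters
   are (t, 0) with probability q^t and (s, 1) otherwise, q being the niche choice
   probability.  So each discounted summand of Eng/Util converges: under V_N = -1
   PEAR explores at time t with probability rho2^t, and the high branch contributes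
   p * E[...], which tends to 0 for engagement and to 1 for utility because
   p * ln (1 + e^VP + e^((1 - p) / p)) -> 1.  A uniform bound K * delta^t lets the
   limit pass through the series, giving
     lim Eng = eA / (1 - delta) + (eE - eA) / (1 - delta rho2),
     lim Util = (1 + uA) / (1 - delta) + (uE - uA) / (1 - delta rho2),
   with eE, uE the one-step values of the mixed menu under V_N = -1.  Then
   eE < eA because e^-1 < e^VP, and uA - uE < 1 because e > 2, while
   1 / (1 - delta rho2) <= 1 / (1 - delta). *)

From Stdlib Require Import Reals Lra Lia.
From Coquelicot Require Import Coquelicot.
Open Scope R_scope.

(** * Finite double sums *)

Definition sum_square (n : nat) (g : nat -> nat -> R) : R :=
  sum_f_R0 (fun s => sum_f_R0 (fun f => g s f) n) n.

Lemma sum_square_ext n g1 g2 :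
  (forall s f, g1 s f = g2 s f) -> sum_square n g1 = sum_square n g2.
Proof. intros H. unfold sum_square. apply sum_eq; intros. apply sum_eq; auto. Qed.

Lemma sum_square_plus n g1 g2 :
  sum_square n (fun s f => g1 s f + g2 s f) = sum_square n g1 + sum_square n g2.
Proof. unfold sum_square. rewrite <- sum_plus. apply sum_eq; intros. apply sum_plus. Qed.

Lemma sum_square_le n g1 g2 :
  (forall s f, g1 s f <= g2 s f) -> sum_square n g1 <= sum_square n g2.
Proof. intros H. unfold sum_square. apply sum_Rle; intros. apply sum_Rle; auto. Qed.

Lemma sum_square_mult_r n K g :
  sum_square n (fun s f => g s f * K) = K * sum_square n g.
Proof.
  unfold sum_square. rewrite scal_sum. apply sum_eq; intros.
  rewrite Rmult_comm, scal_sum. reflexivity.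
Qed.

Lemma sum_square_succ n g : (forall s f, (n < s + f)%nat -> g s f = 0) ->
  sum_square (S n) g = sum_square n g.
Proof.
  intros H. unfold sum_square. simpl. rewrite sum_plus.
  rewrite (sum_eq_R0 (fun s => g s (S n))) by (intros; apply H; lia).
  rewrite (sum_eq_R0 (fun f => g (S n) f)) by (intros; apply H; lia).
  rewrite H by lia. ring.
Qed.

Lemma sum_square_shift_s n h : (forall s f, (n < s + f)%nat -> h s f = 0) ->
  sum_square (S n) (fun s f => match s with O => 0 | S s' => h s' f end) = sum_square n h.
Proof.
  intros H. unfold sum_square. rewrite decomp_sum by lia. simpl pred.
  rewrite (sum_eq_R0 (fun _ => 0)), Rplus_0_l by auto.
  apply sum_eq; intros s Hs. simpl. rewrite H by lia. ring.
Qed.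

Lemma sum_square_shift_f n h : (forall s f, (n < s + f)%nat -> h s f = 0) ->
  sum_square (S n) (fun s f => match f with O => 0 | S f' => h s f' end) = sum_square n h.
Proof.
  intros H. unfold sum_square.
  rewrite (sum_eq _ (fun s => sum_f_R0 (fun f => h s f) n)).
  2:{ intros s _. rewrite decomp_sum by lia. simpl pred. ring. }
  simpl. rewrite (sum_eq_R0 (fun f => h (S n) f)) by (intros; apply H; lia). ring.
Qed.

(** * Limits at 0+ and dominated convergence of series *)

Lemma at_right_0_of_interval (P : R -> Prop) eps :
  0 < eps -> (forall p, 0 < p < eps -> P p) -> at_right 0 P.
Proof.
  intros Heps HP. exists (mkposreal eps Heps). intros p Hball Hp.
  change (Rabs (p - 0) < eps) in Hball.
  rewrite Rminus_0_r, Rabs_pos_eq in Hball by lra. apply HP. lra.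
Qed.

Lemma filterlim_Rplus_fun {T} {F : (T -> Prop) -> Prop} {FF : Filter F} (f g : T -> R) a b :
  filterlim f F (locally a) -> filterlim g F (locally b) ->
  filterlim (fun x => f x + g x) F (locally (a + b)).
Proof. intros Hf Hg. exact (filterlim_comp_2 f g Rplus Hf Hg (filterlim_plus a b)). Qed.

Lemma filterlim_Rmult_fun {T} {F : (T -> Prop) -> Prop} {FF : Filter F} (f g : T -> R) a b :
  filterlim f F (locally a) -> filterlim g F (locally b) ->
  filterlim (fun x => f x * g x) F (locally (a * b)).
Proof. intros Hf Hg. exact (filterlim_comp_2 f g Rmult Hf Hg (filterlim_mult a b)). Qed.

Lemma filterlim_affine_at_right_0 a b :
  filterlim (fun p => a + b * p) (at_right 0) (locally a).
Proof.
  replace (locally a) with (locally (a + b * 0)) by (f_equal; ring).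
  apply filterlim_Rplus_fun; [apply filterlim_const |].
  apply filterlim_Rmult_fun; [apply filterlim_const |].
  exact (filterlim_filter_le_1 _ (@filter_le_within _ (locally 0) _ (fun u => 0 < u))
           (filterlim_id _ _)).
Qed.

Lemma filterlim_squeeze_at_right_0 (f : R -> R) l a b :
  at_right 0 (fun p => l + a * p <= f p <= l + b * p) ->
  filterlim f (at_right 0) (locally l).
Proof.
  intros Hsq. apply (filterlim_le_le (fun p => l + a * p) f (fun p => l + b * p) l Hsq);
    apply filterlim_affine_at_right_0.
Qed.

Lemma is_series_geom_scal K d : 0 <= d < 1 -> is_series (fun t => K * d ^ t) (K / (1 - d)).
Proof.
  intros Hd. apply (is_series_scal_l K (fun t => d ^ t)).
  apply is_series_geom. rewrite Rabs_pos_eq; lra.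
Qed.

Lemma ex_series_geom_dominated (c : nat -> R) K d : 0 <= d < 1 ->
  (forall t, Rabs (c t) <= K * d ^ t) -> ex_series c.
Proof.
  intros Hd Hc. apply (ex_series_le c (fun t => K * d ^ t)); [exact Hc |].
  eexists. apply is_series_geom_scal, Hd.
Qed.

Lemma Series_geom_dominated_tail (c : nat -> R) K d N : 0 <= d < 1 ->
  (forall t, Rabs (c t) <= K * d ^ t) ->
  Rabs (Series c) <= sum_f_R0 (fun t => Rabs (c t)) N + K * d ^ S N / (1 - d).
Proof.
  intros Hd Hc.
  assert (Htail : forall k, Rabs (c (S N + k)%nat) <= K * d ^ S N * d ^ k)
    by (intros k; rewrite Rmult_assoc, <- pow_add; apply Hc).
  rewrite (Series_incr_n c (S N)) by (lia || apply (ex_series_geom_dominated c K d Hd Hc)).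
  simpl pred. eapply Rle_trans; [apply Rabs_triang | apply Rplus_le_compat].
  - apply sum_f_R0_triangle.
  - eapply Rle_trans; [apply Series_Rabs |].
    + apply (ex_series_geom_dominated _ (K * d ^ S N) d Hd).
      intros k. rewrite Rabs_Rabsolu. apply Htail.
    + rewrite <- (is_series_unique _ _ (is_series_geom_scal (K * d ^ S N) d Hd)).
      apply Series_le; [intros k; split; [apply Rabs_pos | apply Htail] |].
      eexists. apply is_series_geom_scal, Hd.
Qed.

Lemma filter_forall_le_nat {T} {F : (T -> Prop) -> Prop} {FF : Filter F}
  (P : nat -> T -> Prop) N :
  (forall t, F (P t)) -> F (fun x => forall t, (t <= N)%nat -> P t x).
Proof.
  intros HP. induction N as [|N IH].
  - apply (filter_imp (P 0%nat)); [| apply HP].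
    intros x Hx t Ht. replace t with 0%nat by lia. exact Hx.
  - apply (filter_imp (fun x => (forall t, (t <= N)%nat -> P t x) /\ P (S N) x));
      [| apply filter_and; [exact IH | apply HP]].
    intros x [Hle HSN] t Ht. destruct (Nat.eq_dec t (S N)) as [-> | Hne]; [exact HSN |].
    apply Hle. lia.
Qed.

Lemma Rabs_le_of_filterlim {T} (F : (T -> Prop) -> Prop) {FF : ProperFilter F}
  (f : T -> R) l M :
  F (fun x => Rabs (f x) <= M) -> filterlim f F (locally l) -> Rabs l <= M.
Proof.
  intros Hbound Hlim.
  assert (HRabs : filterlim (fun x => Rabs (f x)) F (locally (Rabs l))).
  { apply (filterlim_comp _ _ _ f Rabs F (locally l)); [exact Hlim |].
    exact (filterlim_Rabs l). }
  exact (@closed_filterlim_loc T R_UniformSpace F _ (fun x => Rabs (f x)) (fun u => u <= M)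
           (Rabs l) HRabs Hbound (closed_le M)).
Qed.

Lemma geom_tail_lt K d eps : 0 <= K -> 0 <= d < 1 -> 0 < eps ->
  exists N, K * d ^ S N / (1 - d) < eps.
Proof.
  intros HK Hd Heps. set (y := eps * (1 - d) / (K + 1)).
  assert (Hy : 0 < y) by (apply Rdiv_lt_0_compat; nra).
  destruct (pow_lt_1_zero d ltac:(rewrite Rabs_pos_eq; lra) y Hy) as [N HN].
  exists N. specialize (HN (S N) ltac:(lia)). rewrite Rabs_pos_eq in HN by (apply pow_le; lra).
  apply Rlt_div_l; [lra |].
  assert (Hky : (K + 1) * y = eps * (1 - d)) by (unfold y; field; lra).
  nra.
Qed.

Lemma filterlim_Series_dominated {T} (F : (T -> Prop) -> Prop) {FF : ProperFilter F}
  (a : T -> nat -> R) (b : nat -> R) K d : 0 <= d < 1 ->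
  F (fun x => forall t, Rabs (a x t) <= K * d ^ t) ->
  (forall t, filterlim (fun x => a x t) F (locally (b t))) ->
  filterlim (fun x => Series (a x)) F (locally (Series b)).
Proof.
  intros Hd Hdom Hlim.
  assert (Hb : forall t, Rabs (b t) <= K * d ^ t).
  { intros t. apply (Rabs_le_of_filterlim F (fun x => a x t)); [| apply Hlim].
    exact (filter_imp _ _ (fun x Hx => Hx t) Hdom). }
  assert (HK : 0 <= K) by (pose proof (Hb 0%nat); pose proof (Rabs_pos (b 0%nat)); simpl in *; lra).
  apply filterlim_locally. intros eps. pose proof (cond_pos eps) as Heps.
  destruct (geom_tail_lt (2 * K) d (eps / 2)) as [N Htail]; [lra | exact Hd | lra |].
  pose proof (lt_0_INR (S N) ltac:(lia)) as HN.
  set (e := eps / (2 * INR (S N))).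
  assert (He : 0 < e) by (apply Rdiv_lt_0_compat; lra).
  assert (Hclose := filter_forall_le_nat _ N
                      (fun t => proj1 (filterlim_locally _ _) (Hlim t) (mkposreal e He))).
  apply (filter_imp _ _) with (2 := filter_and _ _ Hdom Hclose). intros x [Hax Hcl].
  change (Rabs (Series (a x) - Series b) < eps).
  assert (Hdiff : forall t, Rabs (a x t - b t) <= (2 * K) * d ^ t).
  { intros t. unfold Rminus. eapply Rle_trans; [apply Rabs_triang |].
    rewrite Rabs_Ropp. pose proof (Hax t). pose proof (Hb t). lra. }
  rewrite <- Series_minus by (eapply ex_series_geom_dominated; eauto).
  eapply Rle_lt_trans; [apply (Series_geom_dominated_tail _ (2 * K) d N Hd Hdiff) |].
  assert (Hhead : sum_f_R0 (fun t => Rabs (a x t - b t)) N <= e * INR (S N)).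
  { rewrite <- sum_cte. apply sum_Rle. intros t Ht. apply Rlt_le, (Hcl t Ht). }
  replace (e * INR (S N)) with (eps / 2) in Hhead by (unfold e; field; lra).
  lra.
Qed.

Lemma Series_geom_const d c : 0 <= d < 1 -> Series (fun t => d ^ t * c) = / (1 - d) * c.
Proof.
  intros Hd. rewrite (Series_ext _ (fun t => c * d ^ t)) by (intros; ring).
  rewrite (is_series_unique _ _ (is_series_geom_scal c d Hd)). unfold Rdiv. ring.
Qed.

Lemma Series_geom_mix d r l x y : 0 <= d < 1 -> 0 <= r <= 1 ->
  Series (fun t => d ^ t * (l + (r ^ t * x + (1 - r ^ t) * y)))
  = (l + y) / (1 - d) + (x - y) / (1 - d * r).
Proof.
  intros Hd Hr. assert (Hdr : 0 <= d * r < 1) by nra.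
  rewrite (Series_ext _ (fun t => (l + y) * d ^ t + (x - y) * (d * r) ^ t))
    by (intros; rewrite Rpow_mult_distr; ring).
  apply is_series_unique.
  exact (is_series_plus _ _ _ _ (is_series_geom_scal _ _ Hd) (is_series_geom_scal _ _ Hdr)).
Qed.

Lemma pow_le_1 x n : 0 <= x <= 1 -> 0 <= x ^ n <= 1.
Proof. intros Hx. split; [apply pow_le; lra |]. rewrite <- (pow1 n). apply pow_incr; lra. Qed.

Lemma pow_le_pow_le_1 x m n : 0 <= x <= 1 -> (m <= n)%nat -> x ^ n <= x ^ m.
Proof.
  intros Hx Hmn. replace n with (m + (n - m))%nat by lia. rewrite pow_add.
  pose proof (pow_le_1 x m Hx). pose proof (pow_le_1 x (n - m) Hx). nra.
Qed.

(** * Choice probabilities and the counter process *)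

Lemma qN_bounds VP v : 0 < qN VP v < 1.
Proof.
  unfold qN. pose proof (exp_pos VP). pose proof (exp_pos v).
  split; [apply Rdiv_lt_0_compat; lra |].
  apply Rlt_div_l; lra.
Qed.

Lemma qN_lt VP v w : v < w -> qN VP v < qN VP w.
Proof.
  intros Hvw. unfold qN. pose proof (exp_increasing _ _ Hvw).
  pose proof (exp_pos v). pose proof (exp_pos VP). set (c := 1 + exp VP).
  assert (0 < c) by (unfold c; lra).
  replace (exp v / (c + exp v)) with (1 - c / (c + exp v)) by (field; lra).
  replace (exp w / (c + exp w)) with (1 - c / (c + exp w)) by (field; lra).
  enough (c / (c + exp w) < c / (c + exp v)) by lra.
  apply Rmult_lt_compat_l; [lra |]. apply Rinv_lt_contravar; nra.
Qed.

Lemma rho1_eq VP p : rho1 VP p = qN VP ((1 - p) / p).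
Proof. reflexivity. Qed.

Lemma rho2_eq VP : rho2 VP = qN VP (-1).
Proof. reflexivity. Qed.

Lemma rho1_bounds VP p : 0 < rho1 VP p < 1.
Proof. apply qN_bounds. Qed.

Lemma rho2_bounds VP : 0 < rho2 VP < 1.
Proof. apply qN_bounds. Qed.

Section CounterDistribution.
Variables VP p v : R.

Lemma dist_support t s f : (t < s + f)%nat -> dist VP p v t s f = 0.
Proof.
  revert s f. induction t as [|t IH]; intros s f H.
  - destruct s, f; simpl; reflexivity || lia.
  - destruct s as [|s], f as [|f]; simpl;
      repeat match goal with |- context [explore ?a ?b ?c ?d] => destruct (explore a b c d) end;
      repeat rewrite IH by lia; ring.
Qed.

Lemma dist_nonneg t s f : 0 <= dist VP p v t s f.
Proof.
  pose proof (qN_bounds VP v).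
  revert s f. induction t as [|t IH]; intros s f.
  - destruct s, f; simpl; lra.
  - destruct s as [|s], f as [|f]; simpl;
      repeat match goal with |- context [explore ?a ?b ?c ?d] => destruct (explore a b c d) end;
      repeat apply Rplus_le_le_0_compat; try apply Rmult_le_pos; auto with real; lra.
Qed.

Lemma dist_mass t : sum_square t (dist VP p v t) = 1.
Proof.
  induction t as [|t IH]; [reflexivity |].
  set (d := dist VP p v t). set (q := qN VP v).
  set (stay := fun s f => if explore VP p s f then 0 else d s f).
  set (succ := fun s f => if explore VP p s f then d s f * q else 0).
  set (fail := fun s f => if explore VP p s f then d s f * (1 - q) else 0).
  assert (Hsupp : forall g, g = stay \/ g = succ \/ g = fail ->
            forall s f, (t < s + f)%nat -> g s f = 0).
  { intros g Hg s f H. unfold stay, succ, fail, d in Hg.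
    destruct Hg as [-> | [-> | ->]]; destruct explore; rewrite ?dist_support by lia; ring. }
  rewrite (sum_square_ext _ _ (fun s f => stay s f
             + match s with O => 0 | S s' => succ s' f end
             + match f with O => 0 | S f' => fail s f' end)) by reflexivity.
  rewrite !sum_square_plus, sum_square_succ, sum_square_shift_s, sum_square_shift_f by auto.
  rewrite <- !sum_square_plus, <- IH. apply sum_square_ext; intros s f.
  unfold stay, succ, fail, d. destruct explore; ring.
Qed.

Lemma stepExp_bounds gE gA K t :
  0 <= gE <= K -> 0 <= gA <= K -> 0 <= stepExp VP p v gE gA t <= K.
Proof.
  intros HE HA.
  change (stepExp VP p v gE gA t) with
    (sum_square t (fun s f => dist VP p v t s f * (if explore VP p s f then gE else gA))).
  assert (Hg : forall s f, 0 <= (if explore VP p s f then gE else gA) <= K)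
    by (intros; destruct explore; lra).
  split.
  - replace 0 with (sum_square t (fun _ _ => 0))
      by (unfold sum_square; rewrite sum_eq_R0; auto; intros; apply sum_eq_R0; auto).
    apply sum_square_le; intros s f. apply Rmult_le_pos; [apply dist_nonneg | apply Hg].
  - rewrite <- (Rmult_1_r K), <- (dist_mass t), <- sum_square_mult_r.
    apply sum_square_le; intros s f. apply Rmult_le_compat_l; [apply dist_nonneg | apply Hg].
Qed.
End CounterDistribution.

(* Law of the counters when PEAR explores until the first failure and never after it:
   (t, 0) if no failure occurred, (s, 1) if the first failure occurred at step s. *)
Definition dist_first_failure (q : R) (t s f : nat) : R :=
  match f with
  | O => if Nat.eqb s t then q ^ t else 0
  | 1%nat => if Nat.ltb s t then q ^ s * (1 - q) else 0
  | _ => 0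
  end.

Lemma sum_f_R0_supported_01 (F : nat -> R) n : (1 <= n)%nat ->
  (forall i, (2 <= i)%nat -> F i = 0) -> sum_f_R0 F n = F 0%nat + F 1%nat.
Proof.
  intros Hn HF. induction n as [|n IHn]; [lia |].
  destruct n as [|n]; [reflexivity |].
  cbn [sum_f_R0] in *. rewrite IHn, (HF (S (S n))) by lia. ring.
Qed.

Section FirstFailure.
Variables VP p v : R.
Variable T : nat.
Hypothesis explore_until_failure : forall s, explore VP p s 0 = true.
Hypothesis stop_after_failure : forall s, (s < T)%nat -> explore VP p s 1 = false.

(* A state (s, 1) that still explores has s >= T > t, where the closed form vanishes. *)
Lemma stay_term_first_failure t s f : (t < T)%nat ->
  (if explore VP p s f then 0 else dist_first_failure (qN VP v) t s f)
  = match f with O => 0 | _ => dist_first_failure (qN VP v) t s f end.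
Proof.
  intros Ht. destruct f as [|[|f]]; rewrite ?explore_until_failure;
    [reflexivity | | now destruct explore].
  destruct (Nat.ltb_spec s T) as [Hs | Hs]; [now rewrite stop_after_failure |].
  destruct explore; [| reflexivity]. unfold dist_first_failure.
  destruct (Nat.ltb_spec s t); [lia | reflexivity].
Qed.

Lemma move_term_first_failure t s f c : (t < T)%nat ->
  (if explore VP p s f then dist_first_failure (qN VP v) t s f * c else 0)
  = match f with O => dist_first_failure (qN VP v) t s O * c | _ => 0 end.
Proof.
  intros Ht. destruct f as [|[|f]]; rewrite ?explore_until_failure; [reflexivity | |].
  - destruct (Nat.ltb_spec s T) as [Hs | Hs]; [now rewrite stop_after_failure |].
    destruct explore; [| reflexivity]. unfold dist_first_failure.
    destruct (Nat.ltb_spec s t); [lia | ring].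
  - destruct explore; [unfold dist_first_failure; ring | reflexivity].
Qed.

Lemma dist_eq_first_failure t s f : (t <= T)%nat ->
  dist VP p v t s f = dist_first_failure (qN VP v) t s f.
Proof.
  revert s f. induction t as [|t IH]; intros s f Ht.
  - destruct s as [|s], f as [|[|f]]; reflexivity.
  - destruct s as [|s], f as [|[|f]]; cbn [dist]; rewrite !IH by lia;
      rewrite ?stay_term_first_failure, ?move_term_first_failure by lia; unfold dist_first_failure;
      repeat match goal with
      | |- context [Nat.eqb ?a ?b] => destruct (Nat.eqb_spec a b)
      | |- context [Nat.ltb ?a ?b] => destruct (Nat.ltb_spec a b)
      end;
      repeat match goal with H : S _ = S _ |- _ => injection H as H end;
      subst; try lia; simpl; ring.
Qed.

Lemma stepExp_eq_first_failure gE gA t : (t <= T)%nat ->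
  stepExp VP p v gE gA t = qN VP v ^ t * gE + (1 - qN VP v ^ t) * gA.
Proof.
  intros Ht. set (q := qN VP v). unfold stepExp.
  destruct t as [|t]; [simpl; rewrite explore_until_failure; ring |].
  rewrite (sum_eq _ (fun s => (if Nat.eqb s (S t) then q ^ S t * gE else 0)
                             + (if Nat.ltb s (S t) then q ^ s * (1 - q) * gA else 0))).
  2:{ intros s _. rewrite sum_f_R0_supported_01 by (lia || (intros [|[|f]] Hf;
        [lia | lia | rewrite dist_eq_first_failure by lia; simpl; ring])).
      rewrite !dist_eq_first_failure, explore_until_failure by lia. fold q.
      unfold dist_first_failure. destruct (Nat.ltb_spec s (S t)).
      - rewrite stop_after_failure by lia. destruct (Nat.eqb s (S t)); ring.
      - destruct (Nat.eqb s (S t)), explore; ring. }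
  cbn [sum_f_R0]. rewrite Nat.eqb_refl, Nat.ltb_irrefl.
  rewrite (sum_eq _ (fun s => q ^ s * (gA * (1 - q)))).
  2:{ intros s Hs. destruct (Nat.eqb_spec s (S t)), (Nat.ltb_spec s (S t)); try lia. ring. }
  rewrite <- scal_sum.
  pose proof (GP_finite q t) as Hgeom. rewrite Nat.add_1_r in Hgeom.
  set (G := sum_f_R0 _ t) in *.
  transitivity (- gA * (G * (q - 1)) + q ^ S t * gE); [ring |].
  rewrite Hgeom. ring.
Qed.
End FirstFailure.

(** * The exploration rule for small p *)

Lemma le_posterior_iff p r : 0 < p < 1 -> 0 <= r ->
  p <= / (1 + (1 - p) / p * r) <-> r <= 1.
Proof.
  intros Hp Hr.
  assert (Hden : 1 + (1 - p) / p * r = (p + (1 - p) * r) / p) by (field; lra).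
  assert (Hpos : 0 < p + (1 - p) * r) by nra.
  rewrite Hden, Rinv_div, <- Rle_div_r by lra.
  split; intros H.
  - assert (p + (1 - p) * r <= 1) by (apply (Rmult_le_reg_l p); lra). nra.
  - assert (p + (1 - p) * r <= 1) by nra. nra.
Qed.

Definition likelihood_ratio VP p s f : R :=
  (rho2 VP ^ s * (1 - rho2 VP) ^ f) / (rho1 VP p ^ s * (1 - rho1 VP p) ^ f).

Lemma explore_iff VP p s f : 0 < p < 1 ->
  explore VP p s f = true <-> likelihood_ratio VP p s f <= 1.
Proof.
  intros Hp.
  assert (Hr : 0 <= likelihood_ratio VP p s f).
  { pose proof (rho1_bounds VP p). pose proof (rho2_bounds VP). unfold likelihood_ratio.
    apply Rlt_le, Rdiv_lt_0_compat; apply Rmult_lt_0_compat; apply pow_lt; lra. }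
  rewrite <- (le_posterior_iff p _ Hp Hr).
  unfold explore, post. destruct Rle_dec; split; easy || discriminate.
Qed.

Lemma rho2_lt_rho1 VP p : 0 < p < 1 -> rho2 VP < rho1 VP p.
Proof.
  intros Hp. rewrite rho1_eq, rho2_eq. apply qN_lt.
  enough (0 <= (1 - p) / p) by lra. apply Rdiv_le_0_compat; lra.
Qed.

Lemma one_sub_rho1_le VP p : 0 < p < 1 -> 1 - rho1 VP p <= (1 + exp VP) * p.
Proof.
  intros Hp. unfold rho1. set (c := 1 + exp VP). set (x := (1 - p) / p).
  pose proof (exp_pos VP). pose proof (exp_pos x).
  (* [exp x >= 1 + x = 1 / p] *)
  assert (Hx : 1 <= p * exp x).
  { pose proof (exp_ineq1_le x). replace 1 with (p * (1 + x)) by (unfold x; field; lra). nra. }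
  replace (1 - exp x / (c + exp x)) with (c / (c + exp x)) by (field; unfold c; lra).
  assert (Hc : 0 < c) by (unfold c; lra).
  assert (c <= c * (p * exp x)) by (rewrite <- (Rmult_1_r c) at 1; apply Rmult_le_compat_l; lra).
  assert (0 <= c * p * c) by (apply Rmult_le_pos; nra).
  apply Rle_div_l; [lra |].
  replace (c * p * (c + exp x)) with (c * p * c + c * (p * exp x)) by ring. lra.
Qed.

Lemma explore_no_failure VP p s : 0 < p < 1 -> explore VP p s 0 = true.
Proof.
  intros Hp. apply explore_iff; [exact Hp |]. unfold likelihood_ratio. rewrite !pow_O, !Rmult_1_r.
  pose proof (rho2_lt_rho1 VP p Hp). pose proof (rho2_bounds VP).
  assert (0 < rho1 VP p ^ s) by (apply pow_lt; lra).
  apply Rle_div_l; [lra |]. rewrite Rmult_1_l. apply pow_incr. lra.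
Qed.

Lemma explore_after_failure VP p T s : 0 < p < 1 ->
  (1 + exp VP) * p < rho2 VP ^ T * (1 - rho2 VP) -> (s < T)%nat ->
  explore VP p s 1 = false.
Proof.
  intros Hp HpT Hs. destruct (explore VP p s 1) eqn:He; [exfalso | reflexivity].
  apply explore_iff in He; [| exact Hp]. revert He. apply Rlt_not_le.
  unfold likelihood_ratio. rewrite !pow_1.
  pose proof (rho1_bounds VP p). pose proof (rho2_bounds VP).
  pose proof (one_sub_rho1_le VP p Hp).
  pose proof (pow_le_1 (rho1 VP p) s ltac:(lra)).
  assert (0 < rho1 VP p ^ s) by (apply pow_lt; lra).
  assert (rho2 VP ^ T <= rho2 VP ^ s) by (apply pow_le_pow_le_1; lra || lia).
  apply Rlt_div_r; [nra |]. nra.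
Qed.

Lemma stepExp_near_0 VP t : at_right 0 (fun p => forall v gE gA,
  stepExp VP p v gE gA t = qN VP v ^ t * gE + (1 - qN VP v ^ t) * gA).
Proof.
  pose proof (rho2_bounds VP). pose proof (exp_pos VP).
  assert (Hgap : 0 < rho2 VP ^ t * (1 - rho2 VP))
    by (apply Rmult_lt_0_compat; [apply pow_lt |]; lra).
  set (eps := rho2 VP ^ t * (1 - rho2 VP) / (1 + exp VP)).
  apply (at_right_0_of_interval _ (Rmin 1 eps)).
  { apply Rmin_pos; [lra | apply Rdiv_lt_0_compat; lra]. }
  intros p Hp v gE gA. pose proof (Rmin_l 1 eps). pose proof (Rmin_r 1 eps).
  assert (Hp1 : 0 < p < 1) by lra.
  assert (HpT : (1 + exp VP) * p < rho2 VP ^ t * (1 - rho2 VP)).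
  { rewrite Rmult_comm. apply Rlt_div_r; [lra |]. fold eps. lra. }
  apply (stepExp_eq_first_failure VP p v t); [| | lia].
  - intros s. apply explore_no_failure, Hp1.
  - intros s Hs. apply (explore_after_failure VP p t); assumption.
Qed.

(** * Limits of the discounted summands *)

Definition pearStep (VP p : R) (g : R -> R) (gA : R) (t : nat) : R :=
  p * stepExp VP p ((1 - p) / p) (g ((1 - p) / p)) gA t
  + (1 - p) * stepExp VP p (-1) (g (-1)) gA t.

Lemma filterlim_pearStep VP g gA t l :
  filterlim (fun p => p * stepExp VP p ((1 - p) / p) (g ((1 - p) / p)) gA t)
    (at_right 0) (locally l) ->
  filterlim (fun p => pearStep VP p g gA t) (at_right 0)
    (locally (l + (rho2 VP ^ t * g (-1) + (1 - rho2 VP ^ t) * gA))).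
Proof.
  intros Hhigh. rewrite <- (Rmult_1_l (_ * g (-1) + _)).
  apply filterlim_Rplus_fun; [exact Hhigh |].
  apply filterlim_Rmult_fun.
  - apply (filterlim_ext (fun p => 1 + -1 * p)); [intros; ring |].
    apply filterlim_affine_at_right_0.
  - apply (filterlim_ext_loc (fun _ => rho2 VP ^ t * g (-1) + (1 - rho2 VP ^ t) * gA)).
    + apply (filter_imp _ _ (fun p H => eq_sym (H _ _ _)) (stepExp_near_0 VP t)).
    + apply filterlim_const.
Qed.

Lemma filterlim_rho1_pow VP t : filterlim (fun p => rho1 VP p ^ t) (at_right 0) (locally 1).
Proof.
  assert (Hrho1 : filterlim (rho1 VP) (at_right 0) (locally 1)).
  { apply (filterlim_squeeze_at_right_0 _ 1 (- (1 + exp VP)) 0).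
    apply (at_right_0_of_interval _ 1); [lra |]. intros p Hp.
    pose proof (one_sub_rho1_le VP p Hp). pose proof (rho1_bounds VP p). lra. }
  induction t as [|t IH]; simpl; [apply filterlim_const |].
  rewrite <- (Rmult_1_l 1). exact (filterlim_Rmult_fun _ _ _ _ Hrho1 IH).
Qed.

Lemma utilExplore_high_bounds VP p : 0 < p < 1 ->
  1 - p <= p * utilExplore VP ((1 - p) / p) <= 1 - p + p * (1 + exp VP).
Proof.
  intros Hp. unfold utilExplore. set (x := (1 - p) / p). set (c := 1 + exp VP).
  assert (Hx : p * x = 1 - p) by (unfold x; field; lra).
  assert (Hc : 1 < c) by (unfold c; pose proof (exp_pos VP); lra).
  pose proof (exp_pos x).
  (* [x <= ln (c + e^x) <= ln ((1 + c) e^x) = x + ln (1 + c) <= x + c] *)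
  assert (Hlow : x <= ln (c + exp x)).
  { rewrite <- (ln_exp x) at 1. apply ln_le; lra. }
  assert (Hup : ln (c + exp x) <= x + c).
  { assert (1 <= exp x) by (pose proof (exp_ineq1_le x); unfold x in *;
        assert (0 <= (1 - p) / p) by (apply Rdiv_le_0_compat; lra); lra).
    apply Rle_trans with (ln ((1 + c) * exp x)); [apply ln_le; nra |].
    rewrite ln_mult, ln_exp by lra.
    enough (ln (1 + c) <= c) by lra.
    rewrite <- (ln_exp c) at 2. apply ln_le; [lra | apply exp_ineq1_le]. }
  fold c. split; nra.
Qed.

Lemma engExplore_bounds VP v : 0 <= engExplore VP v <= 1.
Proof.
  unfold engExplore. pose proof (exp_pos VP). pose proof (exp_pos v).
  split; [apply Rdiv_le_0_compat; lra | apply Rle_div_l; lra].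
Qed.

Lemma engApp_bounds VP : 0 <= engApp VP <= 1.
Proof.
  unfold engApp. pose proof (exp_pos VP).
  split; [apply Rdiv_le_0_compat; lra | apply Rle_div_l; lra].
Qed.

Lemma filterlim_eng_high VP t :
  filterlim (fun p => p * stepExp VP p ((1 - p) / p) (engExplore VP ((1 - p) / p)) (engApp VP) t)
    (at_right 0) (locally 0).
Proof.
  apply (filterlim_squeeze_at_right_0 _ 0 0 1), (at_right_0_of_interval _ 1); [lra |].
  intros p Hp.
  pose proof (stepExp_bounds VP p ((1 - p) / p) _ _ 1 t
                (engExplore_bounds VP ((1 - p) / p)) (engApp_bounds VP)).
  nra.
Qed.

Lemma filterlim_util_high VP t :
  filterlim (fun p => p * stepExp VP p ((1 - p) / p) (utilExplore VP ((1 - p) / p)) (utilApp VP) t)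
    (at_right 0) (locally 1).
Proof.
  apply (filterlim_ext_loc (fun p => rho1 VP p ^ t * (p * utilExplore VP ((1 - p) / p))
                                     + (1 - rho1 VP p ^ t) * (0 + utilApp VP * p))).
  { apply (filter_imp _ _) with (2 := stepExp_near_0 VP t). intros p Hstep.
    rewrite Hstep, <- rho1_eq. ring. }
  replace (locally 1) with (locally (1 * 1 + (1 - 1) * 0)) by (f_equal; ring).
  apply filterlim_Rplus_fun; apply filterlim_Rmult_fun.
  - apply filterlim_rho1_pow.
  - apply (filterlim_squeeze_at_right_0 _ 1 (-1) (1 + exp VP - 1)).
    apply (at_right_0_of_interval _ 1); [lra |]. intros p Hp.
    pose proof (utilExplore_high_bounds VP p Hp). lra.
  - apply (filterlim_ext (fun p => 1 + -1 * rho1 VP p ^ t)); [intros; ring |].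
    replace (locally (1 - 1)) with (locally (1 + -1 * 1)) by (f_equal; ring).
    apply filterlim_Rplus_fun; [apply filterlim_const |].
    apply filterlim_Rmult_fun; [apply filterlim_const | apply filterlim_rho1_pow].
  - apply filterlim_affine_at_right_0.
Qed.

Lemma filterlim_pear_Series delta VP g gA K l : 0 <= delta < 1 ->
  (forall p t, 0 < p < 1 -> 0 <= pearStep VP p g gA t <= K) ->
  (forall t, filterlim (fun p => p * stepExp VP p ((1 - p) / p) (g ((1 - p) / p)) gA t)
               (at_right 0) (locally l)) ->
  filterlim (fun p => Series (fun t => delta ^ t * pearStep VP p g gA t)) (at_right 0)
    (locally ((l + gA) / (1 - delta) + (g (-1) - gA) / (1 - delta * rho2 VP))).
Proof.
  intros Hd Hbound Hhigh. pose proof (rho2_bounds VP).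
  rewrite <- Series_geom_mix by lra.
  apply (filterlim_Series_dominated _ _ _ K delta Hd).
  - apply (at_right_0_of_interval _ 1); [lra |]. intros p Hp t.
    pose proof (Hbound p t Hp). pose proof (pow_le delta t ltac:(lra)).
    rewrite Rabs_pos_eq by nra. nra.
  - intros t. apply filterlim_Rmult_fun; [apply filterlim_const |].
    apply filterlim_pearStep, Hhigh.
Qed.

Lemma pearStep_eng_bounds VP p t : 0 < p < 1 ->
  0 <= pearStep VP p (engExplore VP) (engApp VP) t <= 1.
Proof.
  intros Hp. unfold pearStep.
  pose proof (stepExp_bounds VP p ((1 - p) / p) _ _ 1 t
                (engExplore_bounds VP ((1 - p) / p)) (engApp_bounds VP)).
  pose proof (stepExp_bounds VP p (-1) _ _ 1 t (engExplore_bounds VP (-1)) (engApp_bounds VP)).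
  split; nra.
Qed.

Lemma utilExplore_pos VP v : 0 < utilExplore VP v.
Proof.
  unfold utilExplore. rewrite <- ln_1. pose proof (exp_pos VP). pose proof (exp_pos v).
  apply ln_increasing; lra.
Qed.

Lemma utilApp_pos VP : 0 < utilApp VP.
Proof. unfold utilApp. rewrite <- ln_1. pose proof (exp_pos VP). apply ln_increasing; lra. Qed.

Lemma pearStep_util_bounds VP p t : 0 < p < 1 ->
  0 <= pearStep VP p (utilExplore VP) (utilApp VP) t
    <= 2 + exp VP + 2 * utilApp VP + utilExplore VP (-1).
Proof.
  intros Hp. unfold pearStep.
  pose proof (utilExplore_high_bounds VP p Hp). pose proof (exp_pos VP).
  pose proof (utilExplore_pos VP ((1 - p) / p)). pose proof (utilExplore_pos VP (-1)).
  pose proof (utilApp_pos VP).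
  set (uh := utilExplore VP ((1 - p) / p)) in *.
  pose proof (stepExp_bounds VP p ((1 - p) / p) uh (utilApp VP) (uh + utilApp VP) t
                ltac:(lra) ltac:(lra)).
  pose proof (stepExp_bounds VP p (-1) (utilExplore VP (-1)) (utilApp VP)
                (utilExplore VP (-1) + utilApp VP) t ltac:(lra) ltac:(lra)).
  set (Sh := stepExp VP p ((1 - p) / p) uh (utilApp VP) t) in *.
  set (Sl := stepExp VP p (-1) (utilExplore VP (-1)) (utilApp VP) t) in *.
  assert (p * Sh <= p * uh + p * utilApp VP) by nra.
  assert ((1 - p) * Sl <= utilExplore VP (-1) + utilApp VP) by nra.
  split; nra.
Qed.

Lemma engExplore_lt_engApp VP : -1 < VP -> engExplore VP (-1) < engApp VP.
Proof.
  intros HVP. unfold engExplore, engApp.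
  pose proof (exp_increasing _ _ HVP). pose proof (exp_pos (-1)).
  set (a := exp VP) in *. set (b := exp (-1)) in *.
  apply Rlt_div_l; [lra |].
  replace (2 * a / (1 + 2 * a) * (1 + a + b)) with (2 * a * (1 + a + b) / (1 + 2 * a))
    by (field; lra).
  apply Rlt_div_r; [lra |]. nra.
Qed.

Lemma utilApp_sub_utilExplore_lt_1 VP : utilApp VP - utilExplore VP (-1) < 1.
Proof.
  unfold utilApp, utilExplore. pose proof (exp_pos VP). pose proof (exp_pos (-1)).
  assert (He : 2 < exp 1) by (pose proof (exp_ineq1 1 ltac:(lra)); lra).
  assert (Hln : ln (1 + 2 * exp VP) < ln (exp 1 * (1 + exp VP + exp (-1))))
    by (apply ln_increasing; nra).
  rewrite ln_mult, ln_exp in Hln by (apply exp_pos || lra). lra.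
Qed.

Theorem mainTheorem5 (delta VP : R) :
  0 <= delta < 1 -> -1 < VP ->
  EngAPP delta VP = / (1 - delta) * (2 * exp VP / (1 + 2 * exp VP)) /\
  UtilAPP delta VP = / (1 - delta) * ln (1 + 2 * exp VP) /\
  exists LE LU : R,
    filterlim (fun p => EngPEAR delta VP p) (at_right 0) (locally LE) /\
    filterlim (fun p => UtilPEAR delta VP p) (at_right 0) (locally LU) /\
    LE < EngAPP delta VP /\
    LU > UtilAPP delta VP.
Proof.
  intros Hd HVP.
  assert (HE : EngAPP delta VP = / (1 - delta) * engApp VP) by apply (Series_geom_const _ _ Hd).
  assert (HU : UtilAPP delta VP = / (1 - delta) * utilApp VP) by apply (Series_geom_const _ _ Hd).
  split; [exact HE |]. split; [exact HU |].
  eexists; eexists; split; [| split].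
  - exact (filterlim_pear_Series delta VP _ _ 1 0 Hd
             (pearStep_eng_bounds VP) (filterlim_eng_high VP)).
  - exact (filterlim_pear_Series delta VP _ _ _ 1 Hd
             (pearStep_util_bounds VP) (filterlim_util_high VP)).
  - pose proof (rho2_bounds VP).
    assert (Hdisc : 0 < / (1 - delta * rho2 VP) <= / (1 - delta))
      by (split; [apply Rinv_0_lt_compat | apply Rinv_le_contravar]; nra).
    rewrite HE, HU. unfold Rdiv. split.
    + pose proof (engExplore_lt_engApp VP HVP). nra.
    + pose proof (utilApp_sub_utilExplore_lt_1 VP). nra.
Qed.
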